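(* Let $G$ be an $r$-regular graph on $m$ vertices with $r\ge 1$ (i.e. $G$ has at least one edge). (a) If $n\ge 2$ is even, then $K_n\boxtimes G$ is $\mathbb{Z}_{nm}$-distance antimagic. (b) If $n\ge 3$ and $m$ are both odd, then $K_n\boxtimes G$ is $\mathbb{Z}_{nm}$-distance antimagic.
   Context: $K_n$ is the complete graph on $n$ vertices. The strong product $G_1\boxtimes G_2$ has vertex set $V(G_1)\times V(G_2)$, with distinct $(x_1,x_2),(y_1,y_2)$ adjacent iff for each $i$ either $x_i=y_i$ or $x_iy_i\in E(G_i)$. For a graph $H$ with $N$ vertices, a $\mathbb{Z}_N$-distance antimagic labelling is a bijection $f:V(H)\to\mathbb{Z}_N$ such that the weights $w_f(x)=\sum_{y\in N(x)} f(y)$ (mod $N$, $N(x)$ the open neighbourhood) are pairwise distinct; $H$ is $\mathbb{Z}_N$-distance antimagic if such a labelling exists. *)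

From mathcomp Require Import all_boot.
Set Implicit Arguments. Unset Strict Implicit. Unset Printing Implicit Defensive.

Definition simple_graph (T : finType) (e : rel T) : Prop :=
  (forall x y, e x y = e y x) /\ (forall x, ~~ e x x).

Definition nbhd (T : finType) (e : rel T) (x : T) : {set T} := [set y | e x y].

Definition regular (T : finType) (e : rel T) (r : nat) : Prop :=
  forall x : T, #|nbhd e x| = r.

Definition Kn_adj (n : nat) : rel 'I_n := fun i j => i != j.

Definition strong_adj (T1 T2 : finType) (e1 : rel T1) (e2 : rel T2)
  : rel (T1 * T2) :=
  fun x y => (x != y) && ((x.1 == y.1) || e1 x.1 y.1)
                      && ((x.2 == y.2) || e2 x.2 y.2).

(* Z_N-distance antimagic, N = number of vertices; Z_N represented by 'I_N,
   with weights computed as the nat sum reduced mod N. *)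
Definition ZN_weight (T : finType) (e : rel T) (f : T -> 'I_#|T|) (x : T) : nat :=
  (\sum_(y in nbhd e x) (f y : nat)) %% #|T|.

Definition ZN_distance_antimagic_labelling (T : finType) (e : rel T)
  (f : T -> 'I_#|T|) : Prop :=
  bijective f /\ injective (ZN_weight e f).

Definition ZN_distance_antimagic (T : finType) (e : rel T) : Prop :=
  exists f : T -> 'I_#|T|, ZN_distance_antimagic_labelling e f.

From mathcomp Require Import all_boot zify.

Set Implicit Arguments.
Unset Strict Implicit.
Unset Printing Implicit Defensive.

(* Write the vertices of K_n ⊠ G as pairs (i, v) with i < n and v in V, and let
   k(v) < m be the rank of v in an enumeration of V.  Given "column multipliers"
   c_0, ..., c_(n-1), all coprime to m and with m dividing their sum, label
       f(i, v) = i + n * ((c_i * k(v)) mod m).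
   Coprimality makes f injective, hence a bijection onto Z_(nm).  The closed
   neighbourhood of (i, v) is 'I_n × N[v], so w_f(i, v) + f(i, v) is the sum of the
   "column sums" Σ_j f(j, u) over u in N[v]; since m | Σ_j c_j, every column sum is
   Σ_j j modulo nm, and w_f(x) + f(x) is the same constant for every vertex x
   (this uses regularity).  A bijective labelling with w_f + f constant modulo N is
   distance antimagic, which proves the theorem once suitable multipliers exist:
   for n even take n/2 copies of 1 and of m-1; for n = 2h+1 and m odd take
   c_0 = 2, h-1 copies of 1 and h+1 copies of m-1.  (The argument does not
   need the hypothesis r >= 1.) *)

(* A bijective labelling whose weight plus label is constant modulo the order
   of the graph is distance antimagic: the weight determines the label. *)
Lemma antimagic_of_constant_closed_weight (T : finType) (e : rel T)
    (f : T -> 'I_#|T|) (C : nat) :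
  bijective f -> (forall x, (ZN_weight e f x + f x) %% #|T| = C) ->
  ZN_distance_antimagic e.
Proof.
move=> f_bij closed_w; exists f; split=> // x y wxy.
apply: (bij_inj f_bij); apply: val_inj.
have /eqP := closed_w x; rewrite -(closed_w y) wxy eqn_modDl => /eqP.
by rewrite !modn_small.
Qed.

Lemma mixed_radix_inj (n i j a b : nat) :
  i < n -> j < n -> i + n * a = j + n * b -> i = j /\ a = b.
Proof.
move=> ltin ltjn eq_ij.
have eq_low : i = j.
  have := congr1 (modn^~ n) eq_ij => /=.
  by rewrite ![_ + n * _]addnC ![n * _]mulnC !modnMDl !modn_small.
by split=> //; move: eq_ij; rewrite eq_low => /addnI/eqP; rewrite eqn_mul2l; lia.
Qed.

Lemma mulmod_coprime_inj (m a k k' : nat) : coprime m a -> k < m -> k' < m ->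
  (a * k) %% m = (a * k') %% m -> k = k'.
Proof.
move=> cop_ma.
wlog le_kk' : k k' / k <= k' => [W ltkm ltk'm eq_mod|].
  by case: (leqP k k') => [/W|/ltnW/W]; [apply | move=> W'; symmetry; apply: W'].
move=> ltkm ltk'm /eqP; rewrite eq_sym eqn_mod_dvd ?leq_mul2l ?le_kk' ?orbT //.
rewrite -mulnBr Gauss_dvdr // => dvd_diff.
case: (posnP (k' - k)) => [|pos_diff]; first lia.
have := dvdn_leq pos_diff dvd_diff; lia.
Qed.

Lemma sum_step (a b x y : nat) : a <= b ->
  \sum_(i < b) (if i < a then x else y) = a * x + (b - a) * y.
Proof.
move=> le_ab; rewrite -(big_mkord xpredT (fun i => if i < a then x else y)).
rewrite (@big_cat_nat _ _ _ a) //=.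
rewrite (@eq_big_nat _ _ _ 0 a _ (fun _ => x)); last by move=> i /andP[_ ->].
rewrite (@eq_big_nat _ _ _ a b _ (fun _ => y)); last first.
  by move=> i /andP[le_ai _]; rewrite ltnNge le_ai.
by rewrite !sum_nat_const_nat subn0.
Qed.

(* Later lemmas only require them when m > 0, since for V empty
   there is nothing to label and m - 1 = 0 is not coprime to m = 0. *)
Definition good_multipliers (m n : nat) (c : nat -> nat) : Prop :=
  (forall i, i < n -> coprime m (c i)) /\ m %| \sum_(i < n) c i.

Section StrongProductLabelling.

Variables (V : finType) (n : nat) (c : nat -> nat).

Local Notation m := #|V%type|.
Local Notation T := ('I_n * V)%type.

Definition column_label (x : T) : nat := x.1 + n * ((c x.1 * enum_rank x.2) %% m).

Lemma card_strong_vertices : #|{: T}| = n * m.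
Proof. by rewrite card_prod card_ord. Qed.

Lemma column_label_lt (x : T) : column_label x < #|{: T}|.
Proof.
rewrite card_strong_vertices /column_label.
have m_pos : 0 < m by apply/card_gt0P; exists x.2.
have := ltn_ord x.1; have := ltn_pmod (c x.1 * enum_rank x.2) m_pos; nia.
Qed.

Definition column_labelling (x : T) : 'I_#|{: T}| := Ordinal (column_label_lt x).

Lemma column_labelling_bij : (0 < m -> good_multipliers m n c) ->
  bijective column_labelling.
Proof.
move=> good; apply: inj_card_bij; last by rewrite card_ord.
move=> [i v] [j w] /(congr1 val); rewrite /= /column_label /=.
have m_pos : 0 < m by apply/card_gt0P; exists v.
case/(mixed_radix_inj (ltn_ord i) (ltn_ord j)) => /val_inj eq_ij; subst j.
move/(mulmod_coprime_inj ((good m_pos).1 i (ltn_ord i)) (ltn_ord _) (ltn_ord _)).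
by move/val_inj/enum_rank_inj ->.
Qed.

Lemma column_sum_mod (w : V) : m %| \sum_(i < n) c i ->
  (\sum_(j < n) column_label (j, w)) %% (n * m) = (\sum_(j < n) (j : nat)) %% (n * m).
Proof.
move=> dvd_sum; rewrite /column_label /= big_split /= -big_distrr /= -modnDmr -muln_modr.
have -> : (\sum_(i < n) (c i * enum_rank w) %% m) %% m = 0.
  by rewrite modn_summ -big_distrl /=; apply/eqP; exact: dvdn_mulr.
by rewrite muln0 addn0.
Qed.

Variables (e : rel V) (r : nat).
Hypotheses (e_irr : forall v, ~~ e v v) (e_reg : regular e r).

Lemma strong_Kn_nbhd (x y : T) :
  (y \in nbhd (strong_adj (@Kn_adj n) e) x) = (y != x) && ((x.2 == y.2) || e x.2 y.2).
Proof. by rewrite inE /strong_adj /Kn_adj orbN andbT eq_sym. Qed.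

Lemma closed_weight_const : (0 < m -> good_multipliers m n c) -> forall x : T,
  (ZN_weight (strong_adj (@Kn_adj n) e) column_labelling x + column_labelling x)
    %% #|{: T}| = (r.+1 * \sum_(j < n) (j : nat)) %% #|{: T}|.
Proof.
move=> good [i v]; rewrite /ZN_weight modnDml /=.
have m_pos : 0 < m by apply/card_gt0P; exists v.
set Nv := [set u | (v == u) || e v u].
have card_Nv : #|Nv| = r.+1.
  have -> : Nv = v |: nbhd e v by apply/setP => u; rewrite !inE eq_sym.
  by rewrite cardsU1 inE e_irr e_reg.
have -> : \sum_(y in nbhd (strong_adj (@Kn_adj n) e) (i, v)) column_label y
          + column_label (i, v) = \sum_(y : T | y.2 \in Nv) column_label y.
  rewrite [RHS](bigD1 (i, v)) ?inE ?eqxx //= addnC; congr (_ + _).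
  by apply: eq_bigl => y; rewrite strong_Kn_nbhd inE andbC.
have -> : \sum_(y : T | y.2 \in Nv) column_label y
          = \sum_(u in Nv) \sum_(j < n) column_label (j, u).
  by rewrite exchange_big pair_big /=; apply: eq_big => -[].
rewrite card_strong_vertices -modn_summ.
under eq_bigr => u _ do rewrite column_sum_mod ?(good m_pos).2 //.
by rewrite modn_summ sum_nat_const card_Nv.
Qed.

Lemma strong_Kn_antimagic_of_multipliers : (0 < m -> good_multipliers m n c) ->
  ZN_distance_antimagic (strong_adj (@Kn_adj n) e).
Proof.
move=> good; apply: (antimagic_of_constant_closed_weight (column_labelling_bij good)).
exact: closed_weight_const.
Qed.

End StrongProductLabelling.

Lemma even_multipliers (m n : nat) : 0 < m -> ~~ odd n ->
  good_multipliers m n (fun i => if i < n./2 then 1 else m.-1).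
Proof.
move=> m_pos n_even; split=> [i _|].
  by case: ifP => _; [exact: coprimen1 | exact: coprimenP].
have n_halves : n = n./2 + n./2 by rewrite addnn even_halfK.
rewrite sum_step; last by rewrite {2}n_halves leq_addr.
by rewrite {2}n_halves addKn muln1 addnC -mulnSr prednK // dvdn_mull.
Qed.

(* Multipliers for n = 2h + 1 and m odd: c_0 = 2, h - 1 copies of 1 and h + 1
   copies of m - 1, obtained from a step function plus a bonus 1 at i = 0. *)
Lemma odd_multipliers (m n : nat) : odd m -> odd n -> 3 <= n ->
  good_multipliers m n
    (fun i => (if i < n./2 then 1 else m.-1) + (if i < 1 then 1 else 0)).
Proof.
move=> m_odd n_odd n_ge3; have m_pos : 0 < m by case: m m_odd.
have n_halves : n = (n./2 + n./2).+1.
  by rewrite addnn odd_halfK // prednK //; case: n n_odd n_ge3.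
have half_pos : 0 < n./2 by move: n_ge3; rewrite n_halves; case: (n./2).
split=> [i _|].
  case: (ltnP i 1) => [i0|_]; last by rewrite addn0; case: ifP => _;
    [exact: coprimen1 | exact: coprimenP].
  by move: i0; rewrite ltnS leqn0 => /eqP ->; rewrite half_pos coprime_sym coprime2n.
have half_le : n./2 <= n by rewrite {2}n_halves -addSn leq_addl.
rewrite big_split /= (sum_step _ _ half_le) (sum_step _ _ (ltnW (ltnW n_ge3))).
rewrite muln1 mul1n muln0 addn0.
have -> : n - n./2 = n./2.+1 by rewrite {1}n_halves -addnS addKn.
by rewrite addnAC addn1 addnC -mulnSr prednK // dvdn_mull.
Qed.

Theorem mainTheorem18 (V : finType) (e : rel V) (r n : nat) :
  simple_graph e -> regular e r -> 1 <= r ->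
  ((2 <= n -> ~~ odd n -> ZN_distance_antimagic (strong_adj (@Kn_adj n) e)) /\
   (3 <= n -> odd n -> odd #|V| -> ZN_distance_antimagic (strong_adj (@Kn_adj n) e))).
Proof.
move=> [_ e_irr] e_reg _; split.
- move=> _ n_even.
  apply: (strong_Kn_antimagic_of_multipliers
            (c := fun i => if i < n./2 then 1 else #|V|.-1) e_irr e_reg).
  by move=> m_pos; exact: even_multipliers.
- move=> n_ge3 n_odd m_odd.
  apply: (strong_Kn_antimagic_of_multipliers
            (c := fun i => (if i < n./2 then 1 else #|V|.-1) + (if i < 1 then 1 else 0))
            e_irr e_reg) => _.
  exact: odd_multipliers.
Qed.
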